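(* Let $k\ge 2$ and $\pi=\pi_1\cdots\pi_n\in S_n(123,\,k(k-1)\cdots 21(k+1))$ with $n\ge 1$. Then the entry $n$ occupies one of the positions $1,2,\dots,k$. Moreover, let $\alpha_\pi$ be the smallest index $j\in\{2,\dots,n\}$ with $\pi_{j-1}<\pi_j$, and $\alpha_\pi=n+1$ if no such index exists. Then the active sites of $\pi$ (with respect to the class $S(123,\,k(k-1)\cdots 21(k+1))$) are exactly the first $\min(\alpha_\pi,k)$ sites of $\pi$. *)

From mathcomp Require Import all_boot.
Set Implicit Arguments. Unset Strict Implicit. Unset Printing Implicit Defensive.

Definition is_perm (n : nat) (s : seq nat) : Prop := perm_eq s (iota 1 n).

Definition order_iso (t p : seq nat) : Prop :=
  size t = size p /\
  forall i j, i < size p -> j < size p ->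
    (nth 0 t i < nth 0 t j) = (nth 0 p i < nth 0 p j).

Definition contains (s p : seq nat) : Prop :=
  exists t, subseq t s /\ order_iso t p.

Definition avoids (s p : seq nat) : Prop := ~ contains s p.

Definition pat123 : seq nat := [:: 1; 2; 3].
Definition patk (k : nat) : seq nat := rcons (rev (iota 1 k)) k.+1.

Definition in_class (k : nat) (s : seq nat) : Prop :=
  avoids s pat123 /\ avoids s (patk k).

(* Insert the new maximum n+1 (n = size s) into site i, 1 <= i <= n+1;
   site i is the gap immediately before the i-th entry (site n+1 = the end). *)
Definition insert_max (s : seq nat) (i : nat) : seq nat :=
  take i.-1 s ++ (size s).+1 :: drop i.-1 s.

Definition active_site (k : nat) (s : seq nat) (i : nat) : Prop :=
  in_class k (insert_max s i).

(* alpha_pi: smallest j in {2..n} with pi_{j-1} < pi_j (1-based), else n+1 *)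
Definition alpha (s : seq nat) : nat :=
  (find (fun j => nth 0 s j < nth 0 s j.+1) (iota 0 (size s).-1)).+2.

Definition pos_of (x : nat) (s : seq nat) : nat := (index x s).+1.

From mathcomp Require Import all_boot zify.
Set Implicit Arguments. Unset Strict Implicit. Unset Printing Implicit Defensive.

(** Write a permutation with its maximum [x] as [a ++ x :: b].  Both forbidden
    patterns end with their maximum, so an occurrence either avoids [x] or uses
    [x] as its last entry, with the rest of the occurrence inside [a].  Hence
    [a ++ x :: b] stays in the class iff [a ++ b] is in it, [a] contains no
    ascent (which would give a 123 with [x]) and [a] has fewer than [k] entries
    (otherwise [k] of them, decreasing, give k...21(k+1) with [x]).  For the
    maximum [n] of [pi] this bounds its position; for a new maximum inserted
    at site [i] it says that [pi_1 ... pi_(i-1)] is decreasing and [i <= k],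
    i.e. [i <= min(alpha pi, k)]. *)

Lemma gtn_trans : transitive gtn.
Proof. by move=> y x z /= lt_yx lt_zy; apply: ltn_trans lt_zy lt_yx. Qed.

Lemma sorted_gtn_nth (s : seq nat) i j :
  sorted gtn s -> i < j -> j < size s -> nth 0 s j < nth 0 s i.
Proof.
move=> s_dec lt_ij lt_js.
by apply: (sorted_ltn_nth gtn_trans) => //; rewrite inE //; apply: ltn_trans lt_js.
Qed.

Lemma sorted_gtn_nth_ltn (s : seq nat) i j : sorted gtn s ->
  i < size s -> j < size s -> (nth 0 s i < nth 0 s j) = (j < i).
Proof.
move=> s_dec lt_i lt_j; have [lt_ij | le_ji] := ltnP i j.
  by have := sorted_gtn_nth s_dec lt_ij lt_j; lia.
case: (eqVneq i j) => [-> | ne_ij]; first by rewrite !ltnn.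
have lt_ji : j < i by rewrite ltn_neqAle eq_sym ne_ij.
by have := sorted_gtn_nth s_dec lt_ji lt_i; lia.
Qed.

Lemma order_iso_sorted_gtn (t p : seq nat) :
  sorted gtn t -> sorted gtn p -> size t = size p -> order_iso t p.
Proof.
move=> t_dec p_dec eq_size; split=> // i j lt_i lt_j.
by rewrite !sorted_gtn_nth_ltn // eq_size.
Qed.

Lemma order_iso_rcons (t p : seq nat) x m :
  order_iso (rcons t x) (rcons p m) -> order_iso t p.
Proof.
rewrite /order_iso !size_rcons => -[[eq_size] iso]; split=> // i j lt_i lt_j.
have := iso i j; rewrite !nth_rcons eq_size lt_i lt_j.
by apply; apply: ltnW.
Qed.

Lemma contains_size (s p : seq nat) : contains s p -> size p <= size s.
Proof. by case=> t [/size_subseq le_ts [<- _]]. Qed.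

Lemma contains_rcons_max (a b p : seq nat) x m :
  (forall y, y \in a -> y < x) -> (forall y, y \in p -> y < m) ->
  contains a p -> contains (a ++ x :: b) (rcons p m).
Proof.
move=> x_max m_max [t [sub_ta [eq_size iso]]]; exists (rcons t x); split.
  by rewrite -cats1; apply: cat_subseq => //=; rewrite eqxx sub0seq.
split; first by rewrite !size_rcons eq_size.
move=> i j; rewrite !size_rcons !ltnS !nth_rcons -eq_size => le_i le_j.
have t_max l : l < size t -> nth 0 t l < x.
  by move=> lt_l; apply/x_max/(mem_subseq sub_ta)/mem_nth.
have p_max l : l < size t -> nth 0 p l < m.
  by rewrite eq_size => lt_l; apply/m_max/mem_nth.
case: (ltnP i (size t)) => [lt_i | ge_i]; case: (ltnP j (size t)) => [lt_j | ge_j].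
- by apply: iso; rewrite -eq_size.
- have -> : j = size t by apply/eqP; rewrite eqn_leq le_j.
  by rewrite eqxx t_max ?p_max.
- have -> : i = size t by apply/eqP; rewrite eqn_leq le_i.
  by rewrite eqxx (ltnNge x) (ltnW (t_max j lt_j)) (ltnNge m) (ltnW (p_max j lt_j)).
- have -> : i = size t by apply/eqP; rewrite eqn_leq le_i.
  have -> : j = size t by apply/eqP; rewrite eqn_leq le_j.
  by rewrite eqxx !ltnn.
Qed.

Lemma contains_cat_max (a b p : seq nat) x m :
  (forall y, y \in a ++ b -> y < x) -> (forall y, y \in p -> y < m) ->
  contains (a ++ x :: b) (rcons p m) -> contains (a ++ b) (rcons p m) \/ contains a p.
Proof.
move=> x_max m_max [t [/subseqP[msk size_msk ->] iso]].
have size_ma : size (take (size a) msk) = size a.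
  by rewrite size_takel // size_msk size_cat leq_addr.
rewrite -(cat_take_drop (size a) msk) mask_cat // in iso.
have : size (drop (size a) msk) = (size b).+1.
  by rewrite size_drop size_msk size_cat addKn.
case: (drop (size a) msk) iso => [//|[] mb] /= iso [size_mb]; last first.
  left; exists (mask (take (size a) msk) a ++ mask mb b); split=> //.
  by apply: cat_subseq; apply: mask_subseq.
right; set ta := mask (take (size a) msk) a in iso.
suff tb_nil : mask mb b = [::].
  exists ta; split; first exact: mask_subseq.
  by apply: (@order_iso_rcons _ _ x m); rewrite -cats1 -tb_nil.
case tbE: (mask mb b) iso => [//|y tb] [size_t iso].
have size_p : size p = size ta + (size tb).+1.
  by move: size_t; rewrite size_cat size_rcons /= addnS => -[].
have lt_ta : size ta < size p by rewrite size_p addnS ltnS leq_addr.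
have t_sta : nth 0 (ta ++ [:: x, y & tb]) (size ta) = x by rewrite nth_cat ltnn subnn.
have t_last : nth 0 (ta ++ [:: x, y & tb]) (size p) < x.
  rewrite nth_cat (ltnNge (size p)) (ltnW lt_ta) /= size_p addKn /=.
  rewrite x_max // mem_cat orbC (mem_mask (m := mb)) // tbE.
  by rewrite (mem_nth 0 (_ : size tb < size (y :: tb))).
have lt_last : size p < size (rcons p m) by rewrite size_rcons.
have := iso _ _ lt_last (ltn_trans lt_ta lt_last).
rewrite t_sta t_last !nth_rcons ltnn eqxx lt_ta.
by rewrite (ltnNge m) (ltnW (m_max _ (mem_nth 0 lt_ta))).
Qed.

Lemma contains_12 (s : seq nat) j :
  j.+1 < size s -> nth 0 s j < nth 0 s j.+1 -> contains s [:: 1; 2].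
Proof.
move=> lt_js asc; exists [:: nth 0 s j; nth 0 s j.+1]; split; last first.
  by split=> // -[|[|i]] [|[|l]] //= _ _; rewrite ?ltnn ?asc // ltnNge ltnW.
rewrite -[X in subseq _ X](cat_take_drop j s).
rewrite (drop_nth 0 (ltnW lt_js)) (drop_nth 0 lt_js).
apply: (@cat_subseq _ [::]); first exact: sub0seq.
by rewrite /= !eqxx sub0seq.
Qed.

Lemma sorted_gtn_avoids_12 (s : seq nat) : sorted gtn s -> avoids s [:: 1; 2].
Proof.
move=> s_dec [t [sub_ts [size_t iso]]].
have t_dec := subseq_sorted gtn_trans sub_ts s_dec.
by have := iso 0 1 isT isT; rewrite sorted_gtn_nth_ltn ?size_t.
Qed.

Lemma sorted_gtn_contains_rev_iota (s : seq nat) k :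
  sorted gtn s -> k <= size s -> contains s (rev (iota 1 k)).
Proof.
move=> s_dec le_ks; exists (take k s); split; first exact: take_subseq.
apply: order_iso_sorted_gtn; first exact: take_sorted.
  by rewrite rev_sorted; apply: iota_ltn_sorted.
by rewrite size_rev size_iota size_takel.
Qed.

Lemma ascent_of_not_sorted_gtn (s : seq nat) : uniq s -> ~~ sorted gtn s ->
  exists2 j, j.+1 < size s & nth 0 s j < nth 0 s j.+1.
Proof.
rewrite gtn_sorted_uniq_geq => -> /= /(sortedP 0) not_geq.
case: (boolP (has (fun j => nth 0 s j < nth 0 s j.+1) (iota 0 (size s).-1))).
  by case/hasP=> j; rewrite mem_iota => lt_j asc; exists j => //; lia.
move/hasPn=> no_asc; case: not_geq => j lt_j; rewrite /= leqNgt.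
by apply: no_asc; rewrite mem_iota; lia.
Qed.

Lemma sorted_gtn_take_alpha (s : seq nat) m :
  uniq s -> m <= size s -> sorted gtn (take m s) = (m < alpha s).
Proof.
move=> s_uniq le_ms; rewrite gtn_sorted_uniq_geq take_uniq //= /alpha ltnS.
set asc := fun j => nth 0 s j < nth 0 s j.+1.
set f := find asc (iota 0 (size s).-1).
apply/(sortedP 0)/idP; rewrite size_takel //.
- move=> no_asc; rewrite leqNgt; apply/negP => lt_fm.
  have has_asc : has asc (iota 0 (size s).-1) by rewrite has_find size_iota; lia.
  have := nth_find 0 has_asc; rewrite nth_iota ?add0n; last by lia.
  have := no_asc _ lt_fm; rewrite /= !nth_take ?(ltnW lt_fm) // /asc.
  by rewrite leqNgt => /negP.
- move=> le_mf j lt_jm.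
  have lt_jf : j < f by lia.
  have := before_find 0 lt_jf; rewrite nth_iota ?add0n; last by lia.
  by rewrite /= !nth_take ?(ltnW lt_jm) // /asc => /negbT; rewrite -leqNgt.
Qed.

Lemma pat123_rcons : pat123 = rcons [:: 1; 2] 3.
Proof. by []. Qed.

Section InsertMax.

Variables (k : nat) (a b : seq nat) (x : nat).
Hypothesis x_max : forall y, y \in a ++ b -> y < x.

Let x_max_prefix y : y \in a -> y < x.
Proof. by move=> ya; apply: x_max; rewrite mem_cat ya. Qed.

Let max_12 y : y \in [:: 1; 2] -> y < 3.
Proof. by rewrite !inE => /orP[] /eqP->. Qed.

Let max_rev_iota y : y \in rev (iota 1 k) -> y < k.+1.
Proof. by rewrite mem_rev mem_iota add1n => /andP[]. Qed.

Lemma in_class_cat_max_prefix :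
  uniq a -> in_class k (a ++ x :: b) -> sorted gtn a /\ size a < k.
Proof.
move=> a_uniq [avoid123 avoidk].
have a_dec : sorted gtn a.
  apply: contraT => /(ascent_of_not_sorted_gtn a_uniq)[j lt_j asc].
  exfalso; apply: avoid123.
  by rewrite pat123_rcons; apply/contains_rcons_max/(contains_12 lt_j).
split=> //; rewrite ltnNge; apply/negP => le_ka; apply: avoidk.
exact/contains_rcons_max/sorted_gtn_contains_rev_iota.
Qed.

Lemma in_class_cat_max :
  in_class k (a ++ b) -> sorted gtn a -> size a < k -> in_class k (a ++ x :: b).
Proof.
move=> [avoid123 avoidk] a_dec lt_ak; split.
  rewrite pat123_rcons => /(contains_cat_max x_max max_12)[|].
    by rewrite -pat123_rcons.
  exact: sorted_gtn_avoids_12.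
move=> /(contains_cat_max x_max max_rev_iota)[//|/contains_size].
by rewrite size_rev size_iota leqNgt lt_ak.
Qed.

End InsertMax.

Section PermutationInClass.

Variables (k n : nat) (s : seq nat).
Hypotheses (s_perm : is_perm n s) (s_class : in_class k s).

Lemma is_perm_mem y : (y \in s) = (0 < y <= n).
Proof. by rewrite (perm_mem s_perm) mem_iota; lia. Qed.

Let size_s : size s = n.
Proof. by rewrite (perm_size s_perm) size_iota. Qed.

Let s_uniq : uniq s.
Proof. by rewrite (perm_uniq s_perm) iota_uniq. Qed.

Lemma index_max_in_class : 0 < n -> index n s < k.
Proof.
move=> n_pos; have n_in_s : n \in s by rewrite is_perm_mem n_pos leqnn.
case/splitPr: n_in_s s_uniq s_class is_perm_mem => a b ab_uniq ab_class ab_mem.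
have perm_n_first : perm_eq (a ++ n :: b) (n :: a ++ b).
  by rewrite (perm_catCA a [:: n] b).
have a_uniq : uniq a := subseq_uniq (prefix_subseq a _) ab_uniq.
have /andP[n_notin_ab _] : uniq (n :: a ++ b) by rewrite -(perm_uniq perm_n_first).
have n_max y : y \in a ++ b -> y < n.
  move=> y_ab; have := ab_mem y; rewrite (perm_mem perm_n_first) inE y_ab orbT.
  move=> /esym/andP[_]; rewrite leq_eqVlt => /orP[/eqP y_n | //].
  by move: n_notin_ab; rewrite -y_n y_ab.
have [_ lt_ak] := in_class_cat_max_prefix n_max a_uniq ab_class.
move: n_notin_ab; rewrite mem_cat negb_or => /andP[n_notin_a _].
by rewrite index_cat (negPf n_notin_a) /= eqxx addn0.
Qed.

Lemma active_site_in_classE i : 1 <= i <= n.+1 ->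
  active_site k s i <-> (i <= alpha s) && (i <= k).
Proof.
move=> /andP[i_pos le_i].
have size_take : size (take i.-1 s) = i.-1 by rewrite size_takel // size_s; lia.
have s_max y : y \in take i.-1 s ++ drop i.-1 s -> y < (size s).+1.
  by rewrite cat_take_drop size_s is_perm_mem; lia.
have -> : (i <= alpha s) && (i <= k) =
          sorted gtn (take i.-1 s) && (size (take i.-1 s) < k).
  by rewrite sorted_gtn_take_alpha // ?size_s ?size_take; lia.
rewrite /active_site /insert_max.
split=> [/(in_class_cat_max_prefix s_max (take_uniq _ s_uniq))[-> ->] // | /andP[]].
by apply: (in_class_cat_max s_max); rewrite cat_take_drop.
Qed.

End PermutationInClass.

Theorem mainTheorem2 (k n : nat) (s : seq nat) :
  2 <= k -> 1 <= n -> is_perm n s -> in_class k s ->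
  (1 <= pos_of n s <= k) /\
  (forall i, 1 <= i <= n.+1 ->
     (active_site k s i <-> i <= minn (alpha s) k)).
Proof.
move=> _ n_pos s_perm s_class; split.
  exact: index_max_in_class s_perm s_class n_pos.
move=> i i_site; rewrite leq_min.
exact: active_site_in_classE s_perm s_class _ i_site.
Qed.
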